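(* Let $T$ be a tree on $t$ vertices. Then for every positive integer $n$, $\mathrm{ex}^*(n,T,2)\leq 2tn$; that is, every $n$-vertex graph containing no copy of $C_4=K_{2,2}$ as a subgraph and no induced copy of $T$ has at most $2tn$ edges.
   Context: For a graph $H$ and integers $n,s\geq 1$, $\mathrm{ex}^*(n,H,s)$ denotes the maximum number of edges in an $n$-vertex graph which contains no copy of $K_{s,s}$ as a (not necessarily induced) subgraph and contains no induced copy of $H$. *)

From mathcomp Require Import all_boot.
Set Implicit Arguments. Unset Strict Implicit. Unset Printing Implicit Defensive.

Definition simple_graph (V : finType) (e : rel V) : Prop :=
  symmetric e /\ irreflexive e.

Definition edge_set (V : finType) (e : rel V) : {set {set V}} :=
  [set [set x; y] | x in V, y in V & e x y].

Definition is_tree (W : finType) (f : rel W) : Prop :=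
  [/\ simple_graph f, 0 < #|W|,
      (forall x y : W, connect f x y) &
      (forall c : seq W, 3 <= size c -> ~ ucycle f c)].

(* G contains a (not necessarily induced) copy of K_{s,s}: an injective
   map of the 2s vertices (two sides 'I_s + 'I_s) such that every vertex of
   the left side is adjacent to every vertex of the right side. *)
Definition contains_Kss (V : finType) (e : rel V) (s : nat) : Prop :=
  exists phi : 'I_s + 'I_s -> V,
    injective phi /\ forall i j : 'I_s, e (phi (inl i)) (phi (inr j)).

Definition contains_induced (V W : finType) (e : rel V) (h : rel W) : Prop :=
  exists phi : W -> V,
    injective phi /\ forall x y : W, e (phi x) (phi y) = h x y.

(* Peeling off vertices of degree at most [2t] one at a time either deletes
   the whole graph, losing at most [2tn] edges, or gets stuck at a nonempty
   set [S] inducing minimum degree above [2t].  In the latter case the tree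
   embeds greedily, as an induced subgraph, into [S]: grow a connected subtree
   one leaf [y] at a time, [y] hanging from [x], and send [y] to a neighbour of
   [f x] that is neither an image nor adjacent to another image [f a].  Since
   [f x] and [f a] have at most one common neighbour in a [C4]-free graph, at
   most [2t] neighbours of [f x] are excluded. *)

From mathcomp Require Import all_boot.
Set Implicit Arguments. Unset Strict Implicit. Unset Printing Implicit Defensive.

Section Degeneracy.
Variables (V : finType) (e : rel V).

Definition induced_edges (S : {set V}) : {set {set V}} :=
  [set [set x; y] | x in S, y in S & e x y].

Definition nbhd_in (S : {set V}) (v : V) : {set V} := [set w in S | e v w].

Lemma edge_set_induced_setT : edge_set e = induced_edges [set: V].
Proof.
apply/setP => E; apply/imset2P/imset2P => -[x y _]; rewrite !inE => /andP[_ xy] ->;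
  by exists x y; rewrite ?inE.
Qed.

Lemma induced_edges0 : induced_edges set0 = set0.
Proof.
apply/setP => E; rewrite /induced_edges inE.
by apply/negbTE/imset2P; case=> x y; rewrite in_set0.
Qed.

Hypothesis e_sym : symmetric e.

Lemma card_induced_edges_setD1 (S : {set V}) v : v \in S ->
  #|induced_edges S| <= #|induced_edges (S :\ v)| + #|nbhd_in S v|.
Proof.
move=> Sv.
have sub : induced_edges S \subset
           induced_edges (S :\ v) :|: [set [set v; w] | w in nbhd_in S v].
  apply/subsetP => E /imset2P[x y Sx]; rewrite inE => /andP[Sy xy] ->.
  rewrite inE; have [xv|xv] := eqVneq x v; first subst x.
    by apply/orP; right; apply/imsetP; exists y; rewrite // inE Sy.
  have [yv|yv] := eqVneq y v; first subst y.
    by apply/orP; right; apply/imsetP; exists x; rewrite 1?setUC // inE Sx e_sym.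
  by apply/orP; left; apply/imset2P; exists x y; rewrite // !inE ?xv ?yv ?Sx ?Sy.
apply: leq_trans (subset_leq_card sub) _.
apply: leq_trans (leq_card_setU _ _).1 _.
by rewrite leq_add2l leq_imset_card.
Qed.

Lemma dense_core_or_sparse k (S : {set V}) :
  (exists2 C : {set V}, C \subset S &
     C != set0 /\ {in C, forall v, k < #|nbhd_in C v|})
  \/ #|induced_edges S| <= k * #|S|.
Proof.
have [m] := ubnP #|S|; elim: m S => // m IH S /ltnSE leSm.
have [S0|S_nz] := eqVneq S set0; first by right; rewrite S0 induced_edges0 cards0.
have [dense|/forall_inPn[v Sv]] := boolP [forall v in S, k < #|nbhd_in S v|].
  by left; exists S => //; split=> // v /(forall_inP dense).
rewrite -leqNgt => low_deg.
have leSvm : #|S :\ v| < m by move: leSm; rewrite (cardsD1 v S) Sv.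
have [[C sCSv dense]|sparse] := IH _ leSvm.
  by left; exists C => //; apply: subset_trans sCSv (subsetDl _ _).
right; apply: leq_trans (card_induced_edges_setD1 Sv) _.
by rewrite (cardsD1 v S) Sv add1n mulnSr; apply: leq_add.
Qed.

End Degeneracy.

Lemma K22_free_common_nbr_uniq (V : finType) (e : rel V) :
  irreflexive e -> ~ contains_Kss e 2 -> forall p q v1 v2 : V,
  p != q -> e p v1 -> e q v1 -> e p v2 -> e q v2 -> v1 = v2.
Proof.
move=> e_irr noK22 p q v1 v2 pq pv1 qv1 pv2 qv2; apply/eqP/negPn/negP => v12.
have edge_neq a b : e a b -> a != b by apply: contraTneq => ->; rewrite e_irr.
have uniq_pqv : uniq [:: p; q; v1; v2].
  by rewrite /= !inE !negb_or pq v12 !(edge_neq p) ?(edge_neq q).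
apply: noK22; exists (tnth [tuple p; q; v1; v2] \o @unsplit 2 2); split.
  exact/inj_comp/(can_inj unsplitK)/(tuple_uniqP [tuple p; q; v1; v2]).
by move=> [[|[|i]] lti] [[|[|j]] ltj].
Qed.

Lemma connect_exit_edge (T : finType) (r : rel T) (A : {pred T}) a y :
  connect r a y -> a \in A -> y \notin A ->
  exists x z, [/\ x \in A, z \notin A & r x z].
Proof.
case/connectP=> p + ->; elim: p a => [|b p IH] a /= => [_ -> //|/andP[ab rp] Aa].
by have [Ab|nAb] := boolP (b \in A); [apply: IH rp Ab | exists a, b].
Qed.

Section Subtrees.
Variables (W : finType) (T : rel W).

Definition induced_rel (A : {set W}) : rel W :=
  [rel u v | [&& T u v, u \in A & v \in A]].

Definition connected_in (A : {set W}) : Prop :=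
  {in A &, forall a b, connect (induced_rel A) a b}.

Lemma path_induced_rel A x p :
  path (induced_rel A) x p -> path T x p /\ all (mem A) p.
Proof.
elim: p x => //= y p IH x /andP[/and3P[xy _ Ay] /IH[py Ap]].
by rewrite xy py Ay Ap.
Qed.

Hypothesis T_sym : symmetric T.

Lemma connected_in_setU1 A x y :
  connected_in A -> x \in A -> T x y -> connected_in (y |: A).
Proof.
move=> conA Ax xy.
have mono a b : connect (induced_rel A) a b -> connect (induced_rel (y |: A)) a b.
  apply: connect_sub => u w /and3P[uw Au Aw].
  by apply: connect1; rewrite /induced_rel /= uw !inE Au Aw !orbT.
have xy' : induced_rel (y |: A) x y.
  by rewrite /induced_rel /= xy !inE eqxx Ax orbT.
have yx' : induced_rel (y |: A) y x.
  by rewrite /induced_rel /= T_sym xy !inE eqxx Ax orbT.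
move=> a b; rewrite !inE => /predU1P[->|Aa] /predU1P[->|Ab].
- exact: connect0.
- exact: connect_trans (connect1 yx') (mono _ _ (conA x b Ax Ab)).
- exact: connect_trans (mono _ _ (conA a x Aa Ax)) (connect1 xy').
- exact: mono (conA a b Aa Ab).
Qed.

Hypothesis T_acyclic : forall c : seq W, 3 <= size c -> ~ ucycle T c.

(* Two neighbours of [y] joined by a path avoiding [y] would close a cycle. *)
Lemma acyclic_nbr_uniq A x z y : connected_in A -> x \in A -> z \in A ->
  y \notin A -> T x y -> T z y -> z = x.
Proof.
move=> conA Ax Az nAy xy zy; apply/eqP/negPn/negP => zx.
case/connectP: (conA x z Ax Az) => p /shortenP[p' pp' uniq_xp' _] z_last.
have [Tp' Ap'] := path_induced_rel pp'.
apply: (T_acyclic (c := y :: x :: p')).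
  by case: p' {pp' uniq_xp' Tp' Ap'} z_last => [/= zx'|//]; rewrite zx' eqxx in zx.
rewrite /ucycle /= rcons_path T_sym xy Tp' -z_last zy.
move: uniq_xp'; rewrite cons_uniq => /andP[-> ->]; rewrite inE negb_or /= andbT.
by apply/andP; split; move: nAy; apply: contraNN; [move/eqP-> | apply: (allP Ap')].
Qed.

End Subtrees.

Section Embedding.
Variables (W : finType) (T : rel W) (V : finType) (e : rel V).
Hypotheses (T_tree : is_tree T) (e_simple : simple_graph e).
Hypothesis noK22 : ~ contains_Kss e 2.
Variable S : {set V}.
Hypothesis S_min_deg : {in S, forall v, 2 * #|W| < #|nbhd_in e S v|}.

Definition embeds_on (A : {set W}) (f : W -> V) : Prop :=
  [/\ {in A &, injective f}, {in A, forall a, f a \in S}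
    & {in A &, forall a b, e (f a) (f b) = T a b}].

Lemma exists_private_nbr A f x : embeds_on A f -> x \in A ->
  exists v, [/\ v \in S, e (f x) v, v \notin f @: A
              & {in A, forall a, a != x -> e (f a) v = false}].
Proof.
move=> [f_inj fS f_ind] Ax.
pose common a := odflt (f x) [pick w | e (f x) w && e (f a) w].
have small : #|f @: A :|: common @: A| < #|nbhd_in e S (f x)|.
  apply: leq_ltn_trans (S_min_deg (fS x Ax)).
  apply: leq_trans (leq_card_setU _ _).1 _; rewrite mul2n -addnn.
  by apply: leq_add; apply: leq_trans (leq_imset_card _ _) (max_card _).
have /subsetPn[v] : ~~ (nbhd_in e S (f x) \subset f @: A :|: common @: A).
  by apply: contraTN small => /subset_leq_card le; rewrite -leqNgt.
rewrite !inE negb_or => /andP[vS xv] /andP[vfA vcommon].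
exists v; split=> // a Aa ax; apply/negbTE/negP => av.
have fafx : f x != f a by apply: contra ax => /eqP/f_inj ->.
suff cav : common a = v by rewrite -cav imset_f in vcommon.
rewrite /common; case: pickP => [w /andP[xw aw] | none] /=.
  exact: K22_free_common_nbr_uniq e_simple.2 noK22 _ _ _ _ fafx xw aw xv av.
by have := none v; rewrite xv av.
Qed.

Lemma embeds_on_extend A f x y v :
  connected_in T A -> embeds_on A f -> x \in A -> y \notin A -> T x y ->
  v \in S -> e (f x) v -> v \notin f @: A ->
  {in A, forall a, a != x -> e (f a) v = false} ->
  embeds_on (y |: A) (fun w => if w == y then v else f w).
Proof.
move=> conA [f_inj fS f_ind] Ax nAy xy vS xv vfA private.
have [[T_sym T_irr] _ _ T_acyclic] := T_tree; have [e_sym e_irr] := e_simple.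
set g := fun w => _.
have gy : g y = v by rewrite /g eqxx.
have gA : {in A, g =1 f}.
  by move=> a Aa; rewrite /g ifN //; apply: contraNneq nAy => <-.
have fa_v a : a \in A -> f a != v.
  by move=> Aa; apply: contraNneq vfA => <-; apply: imset_f.
have Tay a : a \in A -> T a y = (a == x).
  move=> Aa; apply/idP/eqP => [ay|->//].
  exact: (acyclic_nbr_uniq T_sym T_acyclic conA Ax Aa nAy xy ay).
have eav a : a \in A -> e (f a) v = T a y.
  by move=> Aa; rewrite Tay //; have [->|/private->] := eqVneq a x.
split=> [a b|a|a b].
- move=> /setU1P[->|Aa] /setU1P[->|Ab]; rewrite ?gy ?gA //.
  + by move/esym/eqP; rewrite (negbTE (fa_v b Ab)).
  + by move/eqP; rewrite (negbTE (fa_v a Aa)).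
  + exact: f_inj.
- by move=> /setU1P[->|Aa]; rewrite ?gy ?gA //; apply: fS.
- move=> /setU1P[->|Aa] /setU1P[->|Ab]; rewrite ?gy ?gA ?e_irr ?T_irr //.
  + by rewrite e_sym T_sym eav.
  + exact: eav.
  + exact: f_ind.
Qed.

Lemma embeds_on_full A f : A != set0 -> connected_in T A -> embeds_on A f ->
  exists g, embeds_on [set: W] g.
Proof.
have [m] := ubnP #|~: A|; elim: m A f => // m IH A f ltm nzA conA emb.
have [AT|] := eqVneq A setT; first by exists f; rewrite -AT.
rewrite -properT => /properP[_ [y0 _ nAy0]].
have [[T_sym _] _ T_conn _] := T_tree.
have [a Aa] := set0Pn _ nzA.
have [x [y [Ax nAy xy]]] := connect_exit_edge (T_conn a y0) Aa nAy0.
have [v [vS xv vfA private]] := exists_private_nbr emb Ax.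
apply: IH (embeds_on_extend conA emb Ax nAy xy vS xv vfA private).
- apply: leq_trans (ltnSE ltm); apply: proper_card.
  by rewrite properC properUr // sub1set.
- by apply/set0Pn; exists y; rewrite setU11.
- exact: (connected_in_setU1 T_sym conA Ax xy).
Qed.

Lemma contains_induced_tree : S != set0 -> contains_induced e T.
Proof.
case/set0Pn=> v0 Sv0; have [[_ T_irr] /card_gt0P[r _] _ _] := T_tree.
have [|||f [f_inj _ f_ind]] := @embeds_on_full [set r] (fun _ => v0).
- by apply/set0Pn; exists r; rewrite set11.
- by move=> a b /set1P-> /set1P->; apply: connect0.
- split=> [a b /set1P-> /set1P-> //|//|a b /set1P-> /set1P->].
  by rewrite e_simple.2 T_irr.
by exists f; split=> [a b|a b]; [apply: f_inj | apply: f_ind]; rewrite inE.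
Qed.

End Embedding.

Theorem proposition3p2 (W : finType) (tT : rel W) (t : nat)
    (HT : is_tree tT) (Ht : #|W| = t)
    (n : nat) (Hn : 0 < n)
    (V : finType) (e : rel V) (HG : simple_graph e) (HV : #|V| = n)
    (HC4 : ~ contains_Kss e 2) (HnoT : ~ contains_induced e tT) :
  #|edge_set e| <= 2 * t * n.
Proof.
have [[C _ [C_nz C_deg]]|sparse] := dense_core_or_sparse HG.1 (2 * t) [set: V].
  case: HnoT; apply: (contains_induced_tree HT HG HC4 (S := C)) => // v Cv.
  by rewrite Ht; apply: C_deg.
by rewrite edge_set_induced_setT -HV -cardsT.
Qed.
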